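(* Let $H_{OK}=[h_1\cdots h_{18}]=[I_9\ M_{OK}]$ be the $9\times18$ binary matrix, where $I_9$ is the identity matrix ($h_i$ the $i$-th unit vector for $i\le9$) and $h_{10},\dots,h_{18}$ are, in order, the columns given in hexadecimal as 1A0, 174, A5, 173, 17, E8, 9, 18D, 1CE (each written as a 9-bit binary string, most significant bit as the top entry). Let $\mathcal P_{OK}$ be the partition of the column indices into the 11 subsets $\{1,2,4\},\{3\},\{5,8\},\{6,17\},\{7,10\},\{11,14\},\{12\},\{13,18\},\{15\},\{9\},\{16\}$. Then $\mathcal P_{OK}$ is a $(3,1)$-partition of $H_{OK}$: every vector of $\mathbb{F}_2^9$, including the zero vector, is the sum of at least one and at most three columns of $H_{OK}$ lying in pairwise distinct subsets of $\mathcal P_{OK}$. Moreover the $[18,9]_2$ code with parity-check matrix $H_{OK}$ has minimum distance $3$ and covering radius $3$ (so it is an $[18,9,3]_23,1$ code).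
   Context: For an $r\times n$ binary parity-check matrix $H$ and $0\le\ell\le R$, an $(R,\ell)$-partition is a partition of the columns of $H$ into nonempty subsets such that every vector of $\mathbb{F}_2^r$ (including zero) is the sum of at least $\ell$ and at most $R$ columns of $H$ lying in pairwise distinct subsets. An $[n,n-r,d]_2R,\ell$ code is a binary linear code of length $n$, codimension $r$, minimum distance $d$, covering radius $R$ (smallest $R$ such that every vector of $\mathbb{F}_2^r$ is a sum of at most $R$ columns of $H$), some parity-check matrix of which admits an $(R,\ell)$-partition. *)

From mathcomp Require Import all_boot all_order all_algebra.
Set Implicit Arguments. Unset Strict Implicit. Unset Printing Implicit Defensive.
Import GRing.Theory.
Local Open Scope ring_scope.

Definition colsum (r n : nat) (H : 'M['F_2]_(r, n)) (S : {set 'I_n}) : 'cV['F_2]_r :=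
  \sum_(j in S) col j H.

(* (R,l)-partition: P is a partition of the column indices into nonempty blocks
   (finset's [partition] includes [set0 \notin P]) such that every vector of F_2^r
   (zero included) is the sum of at least l and at most R columns lying in
   pairwise distinct blocks. *)
Definition is_RL_partition (r n : nat) (H : 'M['F_2]_(r, n))
  (P : {set {set 'I_n}}) (R l : nat) : Prop :=
  partition P [set: 'I_n] /\
  forall v : 'cV['F_2]_r, exists S : {set 'I_n},
    [/\ (l <= #|S| <= R)%N,
        {in S &, forall i j, i != j -> pblock P i != pblock P j}
      & colsum H S = v].

Definition wt (n : nat) (x : 'rV['F_2]_n) : nat := #|[set j | x 0 j != 0]|.

Definition is_codeword (r n : nat) (H : 'M['F_2]_(r, n)) (x : 'rV['F_2]_n) : Prop :=
  H *m x^T = 0.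

Definition min_distance (r n : nat) (H : 'M['F_2]_(r, n)) (d : nat) : Prop :=
  (exists x : 'rV['F_2]_n, [/\ x != 0, is_codeword H x & wt x = d]) /\
  (forall x : 'rV['F_2]_n, x != 0 -> is_codeword H x -> (d <= wt x)%N).

Definition covers_within (r n : nat) (H : 'M['F_2]_(r, n)) (R : nat) : Prop :=
  forall v : 'cV['F_2]_r, exists S : {set 'I_n}, (#|S| <= R)%N /\ colsum H S = v.

Definition covering_radius (r n : nat) (H : 'M['F_2]_(r, n)) (R : nat) : Prop :=
  covers_within H R /\ forall R', (R' < R)%N -> ~ covers_within H R'.

(* hex columns 1A0,174,A5,173,17,E8,9,18D,1CE in decimal *)
Definition hexcols : seq nat := [:: 416; 372; 165; 371; 23; 232; 9; 397; 462]%N.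

(* H_OK = [I_9 M_OK]; row 0 is the top entry = most significant bit (2^8). *)
Definition H_OK : 'M['F_2]_(9, 18) :=
  \matrix_(i < 9, j < 18)
    if (j < 9)%N then ((i : nat) == (j : nat))%:R
    else (odd (nth 0%N hexcols (j - 9) %/ 2 ^ (8 - i)))%:R.

Definition blk (s : seq nat) : {set 'I_18} := [set j : 'I_18 | (j : nat) \in s].

(* 0-based version of {1,2,4},{3},{5,8},{6,17},{7,10},{11,14},{12},{13,18},{15},{9},{16} *)
Definition P_OK : {set {set 'I_18}} :=
  [set blk [:: 0; 1; 3]%N; blk [:: 2]%N; blk [:: 4; 7]%N; blk [:: 5; 16]%N;
       blk [:: 6; 9]%N; blk [:: 10; 13]%N; blk [:: 11]%N; blk [:: 12; 17]%N;
       blk [:: 14]%N; blk [:: 8]%N; blk [:: 15]%N].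

From mathcomp Require Import all_boot all_order all_algebra zify.
Set Implicit Arguments. Unset Strict Implicit. Unset Printing Implicit Defensive.
Import GRing.Theory.
Local Open Scope ring_scope.

(* Over F_2 a set of columns sums to v exactly when the xor of their bit strings is the
   bit string of v, and a set of k columns of an r x n matrix is the value set of a
   k-element subsequence of [0, n).  Every claim about sums of at most three columns thus
   becomes a finite search over such subsequences, decided by evaluation.  The partition
   is the fibre partition of a block-index function, so columns lying in pairwise distinct
   blocks are those on which that function is injective. *)

Section KSubseqs.

Variable T : eqType.

Fixpoint ksubseqs (k : nat) (s : seq T) {struct s} : seq (seq T) :=
  match k, s with
  | 0, _ => [:: [::]]
  | _.+1, [::] => [::]
  | k'.+1, x :: s' => map (cons x) (ksubseqs k' s') ++ ksubseqs k s'
  end.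

Lemma ksubseqsP k s t : reflect (subseq t s /\ size t = k) (t \in ksubseqs k s).
Proof.
apply: (iffP idP) => [|[t_sub <-]].
  elim: s k t => [|x s IHs] [|k] t //; rewrite [ksubseqs _ _]/= ?inE.
  - by move/eqP->.
  - by move/eqP->; rewrite sub0seq.
  rewrite mem_cat => /orP[/mapP[u /IHs[u_sub <-] ->] | /IHs[t_sub <-]].
    by rewrite /= eqxx.
  by split=> //; apply: subseq_trans t_sub (subseq_cons s x).
elim: s t t_sub => [|x s IHs] [|y t] //=; rewrite ?mem_head // mem_cat.
by case: eqP => [-> /IHs t_in | _ /IHs ->]; rewrite ?map_f ?orbT.
Qed.

End KSubseqs.

Fixpoint bitseqs (k : nat) : seq (seq bool) :=
  if k is k'.+1 then [seq b :: t | b <- [:: false; true], t <- bitseqs k'] else [:: [::]].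

Lemma mem_bitseqs (b : seq bool) : b \in bitseqs (size b).
Proof. by elim: b => [|x b IHb] //; apply/allpairsP; exists (x, b); case: x. Qed.

Lemma uniq_map_inj_in (T1 T2 : eqType) (f : T1 -> T2) (s : seq T1) :
  uniq (map f s) -> {in s &, injective f}.
Proof.
elim: s => [|x s IHs] //= /andP[fx_notin /IHs f_inj] y z.
rewrite !inE => /predU1P[->|ys] /predU1P[->|zs] // fyz.
- by move: fx_notin; rewrite fyz map_f.
- by move: fx_notin; rewrite -fyz map_f.
- exact: f_inj.
Qed.

Lemma ord_set_ksubseqs n (S : {set 'I_n}) :
  exists s : seq 'I_n, [/\ map val s \in ksubseqs #|S| (iota 0 n), uniq s & S = [set x in s]].
Proof.
set s := [seq x <- ord_enum n | x \in S].
have s_uniq : uniq s by rewrite filter_uniq ?ord_enum_uniq.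
have defS : S = [set x in s] by apply/setP => x; rewrite inE mem_filter mem_ord_enum andbT.
exists s; split=> //; apply/ksubseqsP; split.
  by rewrite -val_ord_enum map_subseq ?filter_subseq.
by rewrite size_map defS cardsE (card_uniqP s_uniq).
Qed.

Lemma ord_seq_of_nat n (s : seq nat) : uniq s -> all (fun j => j < n)%N s ->
  exists s' : seq 'I_n, [/\ uniq s', map val s' = s & [set x | val x \in s] = [set x in s']].
Proof.
move=> s_uniq s_lt; exists (pmap insub s); split; first exact: pmap_sub_uniq.
  rewrite (pmap_filter (insubK _)); apply/all_filterP.
  by rewrite (eq_all (isSome_insub _)).
by apply/setP => x; rewrite !inE mem_pmap_sub.
Qed.

Lemma preim_partition_pblockE (T : finType) (rT : eqType) (f : T -> rT) (x y : T) :
  (y \in pblock (preim_partition f [set: T]) x) = (f x == f y).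
Proof.
by apply: pblock_equivalence_partition; rewrite ?inE //; split=> // /eqP->.
Qed.

Lemma preim_partition_blocks n (B : seq (seq nat)) (f : nat -> nat) :
  all (fun k => all (fun j => (j \in nth [::] B k) == (f j == k)) (iota 0 n))
      (iota 0 (size B)) ->
  all (fun j => f j < size B)%N (iota 0 n) ->
  all (fun k => has (fun j => f j == k) (iota 0 n)) (iota 0 (size B)) ->
  [set:: [seq [set x : 'I_n | val x \in b] | b <- B]] =
    preim_partition (fun x : 'I_n => f x) [set: 'I_n].
Proof.
move=> /allP blockE /allP f_lt /allP block_nz.
have {}blockE k j : (j < n)%N -> (k < size B)%N -> (j \in nth [::] B k) = (f j == k).
  by move=> ltjn ltkB; apply/eqP/(allP (blockE k _)); rewrite mem_iota.
apply/setP => A; rewrite inE; apply/mapP/imsetP => [[b bB ->] | [x _ ->]].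
  have ltkB : (index b B < size B)%N by rewrite index_mem.
  have /hasP[j]: has (fun j => f j == index b B) (iota 0 n) by apply: block_nz; rewrite mem_iota.
  rewrite mem_iota => ltjn /eqP fj; exists (Ordinal ltjn); rewrite ?inE //.
  by apply/setP => y; rewrite !inE -[b in LHS](nth_index [::] bB) blockE ?ltn_ord // fj eq_sym.
have ltfB : (f x < size B)%N by apply: f_lt; rewrite mem_iota add0n ltn_ord.
exists (nth [::] B (f x)); first exact: mem_nth.
by apply/setP => y; rewrite !inE blockE ?ltn_ord // eq_sym.
Qed.

Lemma F2_natr_eq0 (b : bool) : ((b%:R : 'F_2) == 0) = ~~ b.
Proof. by case: b; rewrite ?oner_eq0 ?eqxx. Qed.

Lemma F2_natrD (a b : bool) : (a%:R + b%:R : 'F_2) = (a (+) b)%:R.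
Proof. by case: a; case: b; apply/val_inj. Qed.

Lemma F2_natr_neq0 (x : 'F_2) : (x != 0)%:R = x.
Proof. by case: x => [[|[|]]] //= ?; apply/val_inj. Qed.

Section BinaryMatrix.

Variables (r n : nat) (H : 'M['F_2]_(r, n)).

Lemma colsum_set_seq (s : seq 'I_n) :
  uniq s -> colsum H [set x in s] = \sum_(j <- s) col j H.
Proof. by move=> s_uniq; rewrite big_uniq //; apply: eq_bigl => j; rewrite inE. Qed.

Lemma codeword_colsum (x : 'rV['F_2]_n) : H *m x^T = colsum H [set j | x 0 j != 0].
Proof.
apply/matrixP => i k; rewrite (ord1 k) summxE mxE [RHS]big_mkcond.
apply: eq_bigr => j _; rewrite inE !mxE -[in LHS](F2_natr_neq0 (x 0 j)).
by case: (_ != 0); rewrite ?mulr1 ?mulr0.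
Qed.

Definition row_of_set (S : {set 'I_n}) : 'rV['F_2]_n := \row_j (j \in S)%:R.

Lemma support_row_of_set S : [set j | row_of_set S 0 j != 0] = S.
Proof. by apply/setP => j; rewrite inE mxE F2_natr_eq0 negbK. Qed.

Lemma min_distance_colsum d :
  (exists S : {set 'I_n}, [/\ S != set0, #|S| = d & colsum H S = 0]) ->
  (forall S : {set 'I_n}, S != set0 -> colsum H S = 0 -> (d <= #|S|)%N) ->
  min_distance H d.
Proof.
move=> [S [S_nz cardS sumS]] minS; split.
  exists (row_of_set S); rewrite /is_codeword /wt codeword_colsum support_row_of_set.
  split=> //; apply: contraNneq S_nz => S0.
  by rewrite -(support_row_of_set S) S0; apply/eqP/setP => j; rewrite !inE mxE eqxx.
move=> x x_nz x_cw; apply: minS; last by rewrite -codeword_colsum.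
apply: contraNneq x_nz => /setP supp0; apply/eqP/rowP => j; rewrite mxE.
by have := supp0 j; rewrite !inE => /negbFE/eqP.
Qed.

Lemma covers_within_monotone R R' : (R <= R')%N -> covers_within H R -> covers_within H R'.
Proof.
move=> leRR' cover v; have [S [cardS sumS]] := cover v.
by exists S; split=> //; apply: leq_trans leRR'.
Qed.

Lemma covering_radius_tight R :
  covers_within H R -> ~ covers_within H R.-1 -> covering_radius H R.
Proof.
move=> cover not_cover; split=> // R' ltR'R /(covers_within_monotone _) cover'.
by apply: not_cover; apply: cover'; lia.
Qed.

Lemma RL_partition_covers P R l : is_RL_partition H P R l -> covers_within H R.
Proof. by move=> [_ RL] v; have [S [/andP[_ leSR] _ sumS]] := RL v; exists S. Qed.

Variable h : nat -> nat -> bool.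
Hypothesis H_bits : forall (i : 'I_r) (j : 'I_n), H i j = (h j i)%:R.

Definition bitvec (v : 'cV['F_2]_r) : seq bool := [seq v i 0 != 0 | i <- ord_enum r].

Definition syndrome (s : seq nat) : seq bool :=
  mkseq (fun i => foldr (fun j b => h j i (+) b) false s) r.

Lemma bitvec_inj : injective bitvec.
Proof.
move=> u v /eq_in_map uv; apply/matrixP => i k; rewrite (ord1 k).
by rewrite -[u i 0]F2_natr_neq0 -[v i 0]F2_natr_neq0 (uv i (mem_ord_enum i)).
Qed.

Lemma bitvec_of_bits (b : seq bool) : size b = r -> bitvec (\col_i (nth false b i)%:R) = b.
Proof.
move=> size_b; rewrite /bitvec -[RHS](mkseq_nth false) size_b /mkseq -val_ord_enum -map_comp.
by apply: eq_map => i; rewrite mxE F2_natr_eq0 negbK.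
Qed.

Lemma bitvec0 : bitvec 0 = nseq r false.
Proof.
have -> : (0 : 'cV['F_2]_r) = \col_i (nth false (nseq r false) i)%:R.
  by apply/matrixP => i j; rewrite !mxE nth_nseq if_same.
by rewrite bitvec_of_bits ?size_nseq.
Qed.

Lemma bitvec_in_bitseqs v : bitvec v \in bitseqs r.
Proof.
by have := mem_bitseqs (bitvec v); rewrite size_map -(size_map val) val_ord_enum size_iota.
Qed.

Lemma bitvec_colsum (s : seq 'I_n) :
  uniq s -> bitvec (colsum H [set x in s]) = syndrome (map val s).
Proof.
move=> s_uniq; rewrite colsum_set_seq // /syndrome /mkseq -val_ord_enum -map_comp.
apply: eq_map => i /=; rewrite summxE.
suff -> : \sum_(j <- s) col j H i 0 = (foldr (fun j b => h j i (+) b) false (map val s))%:R.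
  by rewrite F2_natr_eq0 negbK.
by elim: s {s_uniq} => [|j s IHs]; rewrite ?big_nil // big_cons IHs mxE H_bits F2_natrD.
Qed.

Lemma colsum_eq_syndrome (s : seq 'I_n) v :
  uniq s -> colsum H [set x in s] = v <-> syndrome (map val s) = bitvec v.
Proof. by move=> s_uniq; rewrite -bitvec_colsum //; split=> [-> | /bitvec_inj]. Qed.

Lemma bitvec_colsum_mem (S : {set 'I_n}) :
  bitvec (colsum H S) \in map syndrome (ksubseqs #|S| (iota 0 n)).
Proof.
have [s [s_in s_uniq defS]] := ord_set_ksubseqs S.
by rewrite [in colsum _ _]defS bitvec_colsum // map_f.
Qed.

Lemma min_distance_syndromes (s : seq nat) :
  s != [::] -> uniq s -> all (fun j => j < n)%N s -> syndrome s = nseq r false ->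
  all (fun k => nseq r false \notin map syndrome (ksubseqs k (iota 0 n))) (iota 1 (size s).-1) ->
  min_distance H (size s).
Proof.
move=> s_nz s_uniq s_lt sum_s miss; apply: min_distance_colsum.
  have [s' [s'_uniq vals' _]] := ord_seq_of_nat s_uniq s_lt.
  exists [set x in s']; rewrite -card_gt0 cardsE (card_uniqP s'_uniq) -(size_map val) vals'.
  split=> //; first by rewrite lt0n size_eq0.
  by apply/(colsum_eq_syndrome _ s'_uniq); rewrite vals' bitvec0.
move=> S S_nz sumS; rewrite leqNgt; apply: contraTN (bitvec_colsum_mem S) => small.
rewrite sumS bitvec0; apply: (allP miss); rewrite mem_iota -card_gt0 in S_nz *; lia.
Qed.

Lemma not_covers_within (b : seq bool) R :
  size b = r ->
  all (fun k => b \notin map syndrome (ksubseqs k (iota 0 n))) (iota 0 R.+1) ->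
  ~ covers_within H R.
Proof.
move=> size_b miss cover; have [S [cardS sumS]] := cover (\col_i (nth false b i)%:R).
have := bitvec_colsum_mem S; rewrite sumS bitvec_of_bits //; apply/negP/(allP miss).
by rewrite mem_iota ltnS.
Qed.

Definition distinct_block_seqs (rT : eqType) (f : nat -> rT) (l R : nat) : seq (seq nat) :=
  [seq s <- flatten [seq ksubseqs k (iota 0 n) | k <- iota l (R.+1 - l)] | uniq (map f s)].

Lemma preim_partition_RL (rT : eqType) (f : nat -> rT) l R :
  {subset bitseqs r <= map syndrome (distinct_block_seqs f l R)} ->
  is_RL_partition H (preim_partition (fun x : 'I_n => f x) [set: 'I_n]) R l.
Proof.
move=> covered; split=> [|v]; first exact: preim_partitionP.
have /mapP[s] := covered _ (bitvec_in_bitseqs v).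
rewrite mem_filter => /andP[f_uniq /flatten_mapP[k]].
rewrite mem_iota => k_range /ksubseqsP[s_sub size_s] /esym syn_s.
have s_uniq : uniq s := subseq_uniq s_sub (iota_uniq 0 n).
have s_lt : all (fun j => j < n)%N s.
  by apply/allP => j /(mem_subseq s_sub); rewrite mem_iota.
have [s' [s'_uniq vals' defS]] := ord_seq_of_nat s_uniq s_lt.
exists [set x | val x \in s]; split.
- by rewrite defS cardsE (card_uniqP s'_uniq) -(size_map val) vals' size_s; lia.
- move=> i j; rewrite !inE => si sj; apply: contraNneq => same_block.
  apply/eqP/val_inj/(uniq_map_inj_in f_uniq) => //; apply/eqP.
  rewrite -(preim_partition_pblockE (fun x : 'I_n => f x)) same_block mem_pblock.
  by rewrite (cover_partition (preim_partitionP _ _)) inE.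
- by rewrite defS; apply/(colsum_eq_syndrome _ s'_uniq); rewrite vals'.
Qed.

End BinaryMatrix.

Definition H_OK_bit (j i : nat) : bool :=
  if (j < 9)%N then i == j else odd (nth 0%N hexcols (j - 9) %/ 2 ^ (8 - i)).

Lemma H_OK_bitE (i : 'I_9) (j : 'I_18) : H_OK i j = (H_OK_bit j i)%:R.
Proof. by rewrite mxE /H_OK_bit; case: ifP. Qed.

Definition P_OK_blocks : seq (seq nat) :=
  [:: [:: 0; 1; 3]; [:: 2]; [:: 4; 7]; [:: 5; 16]; [:: 6; 9]; [:: 10; 13]; [:: 11];
      [:: 12; 17]; [:: 14]; [:: 8]; [:: 15]]%N.

Definition P_OK_block (j : nat) : nat := find (fun b => j \in b) P_OK_blocks.

Lemma P_OK_preim : P_OK = preim_partition (fun x : 'I_18 => P_OK_block x) [set: 'I_18].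
Proof.
rewrite -(preim_partition_blocks (B := P_OK_blocks)).
- by apply/setP => A; rewrite !inE -!orbA.
- by vm_compute.
- by vm_compute.
- by vm_compute.
Qed.

Theorem theorem7p1 :
  is_RL_partition H_OK P_OK 3 1 /\ min_distance H_OK 3 /\ covering_radius H_OK 3.
Proof.
have RL : is_RL_partition H_OK P_OK 3 1.
  rewrite P_OK_preim; apply: (preim_partition_RL H_OK_bitE); apply/allP.
  (* Naming the list lets vm_compute evaluate it once rather than once per vector. *)
  set syndromes := map _ _.
  by vm_compute.
split=> //; split.
  by apply: (min_distance_syndromes H_OK_bitE (s := [:: 5; 8; 15]%N)); vm_compute.
apply: covering_radius_tight; first exact: RL_partition_covers RL.
apply: (not_covers_within H_OK_bitE
          (b := [:: false; false; false; false; false; true; true; true; false])); first by [].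
by vm_compute.
Qed.
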